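(* Let $\mathcal{F}$ be a frame and $C_s,C_{cut},C_o\subseteq\mathcal{CH}$ such that $C_{cut}$ is an undirected cut between $C_s$ and $C_o$. If there is no disclosure between $C_s$ and $C_{cut}$, then there is no disclosure between $C_s$ and $C_o$.
   Context: A frame $\mathcal{F}$ consists of pairwise disjoint sets $\mathcal{LO}$ (locations), $\mathcal{CH}$ (channels), $\mathcal{D}$ (data). Each channel $c$ either has both a sender $\mathrm{sender}(c)\in\mathcal{LO}$ and recipient $\mathrm{recipient}(c)\in\mathcal{LO}$ (possibly equal), or neither; $\mathrm{chans}(\ell)=\{c:\mathrm{sender}(c)=\ell\text{ or }\mathrm{recipient}(c)=\ell\}$. Each location $\ell$ has a prefix-closed set $\mathrm{traces}(\ell)$ of finite or infinite sequences of labels $(c,v)$, $c\in\mathrm{chans}(\ell)$, $v\in\mathcal{D}$. Events come from a set $E$ with $\mathrm{chan}:E\to\mathcal{CH}$, $\mathrm{msg}:E\to\mathcal{D}$. A system of events $(B,\preceq)$ has $B\subseteq E$ and $\preceq$ a partial order with finitely many predecessors per event; it is an execution ($\in\mathrm{exec}(\mathcal{F})$) iff for every location $\ell$ the events whose channel has $\ell$ as sender or recipient are linearly ordered and, read as the sequence of labels $(\mathrm{chan}(e),\mathrm{msg}(e))$, lie in $\mathrm{traces}(\ell)$. For $C\subseteq\mathcal{CH}$, $\mathcal{B}|_C$ keeps events with channel in $C$ with the restricted order; $\mathrm{lruns}_C$ is the set of $\mathcal{A}|_C$, $\mathcal{A}\in\mathrm{exec}(\mathcal{F})$ ($C$-runs);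 $J_C^{C'}(\mathcal{B})=\{\mathcal{A}|_{C'}:\mathcal{A}\in\mathrm{exec}(\mathcal{F}),\ \mathcal{A}|_C=\mathcal{B}\}$. There is no disclosure from $C$ to $C'$ iff $J_C^{C'}(\mathcal{B})=\mathrm{lruns}_{C'}$ for every $C$-run $\mathcal{B}$; this relation is symmetric, and ''no disclosure between $C$ and $C'$'' means no disclosure from $C$ to $C'$. An undirected path is a sequence of locations $\ell_0,\dots,\ell_n$ and channels $c_1,\dots,c_n$ with each $c_k$ having endpoints $\ell_{k-1},\ell_k$ in some direction (the path traverses the $c_k$). $C_{cut}$ is an undirected cut between $C_s$ and $C_o$ iff $C_s,C_{cut},C_o$ are pairwise disjoint and every undirected path from an endpoint location of a channel in $C_o$ to an endpoint location of a channel in $C_s$ traverses some channel in $C_{cut}$. *)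

From Stdlib Require Import List.
Import ListNotations.
Set Implicit Arguments.

Section Frames.
Variables (LO CH D : Type).

(** A (finite or infinite) sequence of labels: [t n = None] means the
    sequence has length <= n; once [None], always [None]. *)
Definition label := (CH * D)%type.
Definition lseq := nat -> option label.
Definition wf_seq (t : lseq) : Prop := forall n, t n = None -> t (S n) = None.
Definition truncate (t : lseq) (n : nat) : lseq :=
  fun k => if Nat.ltb k n then t k else None.

Definition is_endpoint (ends : CH -> option (LO * LO)) (l : LO) (c : CH) : Prop :=
  exists a b, ends c = Some (a, b) /\ (l = a \/ l = b).

End Frames.

(** A frame: locations [LO], channels [CH], data [D] (distinct types, hence
    pairwise disjoint); [ends c = Some (sender, recipient)] or [None]
    (channel with neither sender nor recipient); prefix-closed trace sets. *)
Record frame (LO CH D : Type) := Frame {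
  ends : CH -> option (LO * LO);
  traces : LO -> lseq CH D -> Prop;
  traces_wf : forall l t, traces l t -> wf_seq t;
  traces_labels : forall l t n c v, traces l t -> t n = Some (c, v) ->
                    is_endpoint ends l c;
  traces_prefix : forall l t n, traces l t -> traces l (truncate t n)
}.

(** A system of events: a set [ev] of events and a relation [le]
    (only its restriction to [ev] matters). *)
Record system (E : Type) := System {
  ev : E -> Prop;
  le : E -> E -> Prop
}.

Section Exec.
Variables (LO CH D E : Type) (F : frame LO CH D) (chan : E -> CH) (msg : E -> D).

Definition is_system (A : system E) : Prop :=
  (forall x, ev A x -> le A x x) /\
  (forall x y, ev A x -> ev A y -> le A x y -> le A y x -> x = y) /\
  (forall x y z, ev A x -> ev A y -> ev A z -> le A x y -> le A y z -> le A x z) /\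
  (forall e, ev A e -> exists s : list E, forall x, ev A x -> le A x e -> In x s).

Definition sys_eq (A B : system E) : Prop :=
  (forall e, ev A e <-> ev B e) /\
  (forall x y, ev A x -> ev A y -> (le A x y <-> le B x y)).

Definition loc_ev (A : system E) (l : LO) (e : E) : Prop :=
  ev A e /\ is_endpoint (ends F) l (chan e).

Definition npred (A : system E) (l : LO) (e : E) (n : nat) : Prop :=
  exists s : list E, NoDup s /\ length s = n /\
    forall x, In x s <-> (loc_ev A l x /\ le A x e /\ x <> e).

Definition reads (A : system E) (l : LO) (t : lseq CH D) : Prop :=
  forall n, match t n with
            | None => ~ exists e, loc_ev A l e /\ npred A l e n
            | Some lab => exists e, loc_ev A l e /\ npred A l e n /\
                                    lab = (chan e, msg e)
            end.

Definition is_exec (A : system E) : Prop :=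
  is_system A /\
  forall l,
    (forall x y, loc_ev A l x -> loc_ev A l y -> le A x y \/ le A y x) /\
    exists t, traces F l t /\ reads A l t.

Definition restrict (A : system E) (C : CH -> Prop) : system E :=
  System (fun e => ev A e /\ C (chan e)) (le A).

Definition lruns (C : CH -> Prop) (S : system E) : Prop :=
  exists A, is_exec A /\ sys_eq (restrict A C) S.

Definition Jset (C C' : CH -> Prop) (B S : system E) : Prop :=
  exists A, is_exec A /\ sys_eq (restrict A C) B /\ sys_eq (restrict A C') S.

Definition no_disclosure (C C' : CH -> Prop) : Prop :=
  forall B, lruns C B -> forall S, Jset C C' B S <-> lruns C' S.

End Exec.

Section Cut.
Variables (LO CH D : Type) (F : frame LO CH D).

Definition connects (c : CH) (l l' : LO) : Prop :=
  ends F c = Some (l, l') \/ ends F c = Some (l', l).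

Fixpoint upath (l : LO) (s : list (CH * LO)) : Prop :=
  match s with
  | [] => True
  | (c, l') :: s' => connects c l l' /\ upath l' s'
  end.

Definition end_loc (l : LO) (s : list (CH * LO)) : LO := last (map snd s) l.

Definition undirected_cut (Cs Ccut Co : CH -> Prop) : Prop :=
  (forall c, ~ (Cs c /\ Ccut c)) /\
  (forall c, ~ (Cs c /\ Co c)) /\
  (forall c, ~ (Ccut c /\ Co c)) /\
  (forall l s co cs, Co co -> is_endpoint (ends F) l co -> upath l s ->
     Cs cs -> is_endpoint (ends F) (end_loc l s) cs ->
     exists c, In c (map fst s) /\ Ccut c).

End Cut.

(* Given a Cs-run B and an execution Ao realising a Co-run S, no disclosure
   between Cs and Ccut yields an execution A1 that realises B and agrees with
   Ao on Ccut.  Split the locations into those reachable from a Co-channel by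
   a path avoiding Ccut, whose events are taken from Ao, and the others, whose
   events are taken from A1.  By the cut property no Cs-channel touches the
   first region, and every channel joining the two regions lies in Ccut, where
   Ao and A1 coincide; so the two executions glue along their common cut
   events, the order being the union of both orders closed under composition
   through shared events.  The glued execution realises B on Cs and S on Co. *)

From Stdlib Require Import List Classical.
Import ListNotations.
Set Implicit Arguments.

Section Relations.
Variable E : Type.
Implicit Types (P Q : E -> Prop) (r : E -> E -> Prop).

Definition porder_on P r :=
  (forall x, P x -> r x x) /\
  (forall x y, P x -> P y -> r x y -> r y x -> x = y) /\
  (forall x y z, P x -> P y -> P z -> r x y -> r y z -> r x z).

Definition fin_below P r :=
  forall e, P e -> exists s : list E, forall x, P x -> r x e -> In x s.

Definition finite_preds r := forall e, exists s : list E, forall x, r x e -> In x s.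

Definition rel_on P r x y := P x /\ P y /\ r x y.

Lemma porder_on_sub P Q r : (forall x, P x -> Q x) -> porder_on Q r -> porder_on P r.
Proof. intros PQ [rfl [anti tr]]; repeat split; eauto. Qed.

Lemma fin_below_sub P Q r : (forall x, P x -> Q x) -> fin_below Q r -> fin_below P r.
Proof. intros PQ fin e he; destruct (fin e (PQ e he)) as [s hs]; exists s; auto. Qed.

Lemma finite_preds_rel_on P r : fin_below P r -> finite_preds (rel_on P r).
Proof.
  intros fin e; destruct (classic (P e)) as [he|he].
  - destruct (fin e he) as [s hs]; exists s; intros x [hx [_ hxe]]; auto.
  - exists []; intros x [_ [he' _]]; contradiction.
Qed.

Lemma finite_preds_union r1 r2 :
  finite_preds r1 -> finite_preds r2 -> finite_preds (fun x y => r1 x y \/ r2 x y).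
Proof.
  intros f1 f2 e; destruct (f1 e) as [s1 h1], (f2 e) as [s2 h2].
  exists (s1 ++ s2); intros x [hx|hx]; apply in_or_app; auto.
Qed.

Lemma finite_preds_comp r1 r2 :
  finite_preds r1 -> finite_preds r2 -> finite_preds (fun x y => exists m, r1 x m /\ r2 m y).
Proof.
  intros f1 f2 e; destruct (f2 e) as [s2 h2].
  assert (big : forall s, exists t, forall x m, In m s -> r1 x m -> In x t).
  { induction s as [|m s [t ht]]; [exists []; intros ? ? []|].
    destruct (f1 m) as [tm htm]; exists (tm ++ t).
    intros x m' [<-|hm] hx; apply in_or_app; eauto. }
  destruct (big s2) as [t ht]; exists t; intros x [m [hxm hme]]; eauto.
Qed.

End Relations.

Section GluedOrder.
Variables (E : Type) (P1 P2 : E -> Prop) (le1 le2 : E -> E -> Prop).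

Definition side_le x y := rel_on P1 le1 x y \/ rel_on P2 le2 x y.

Definition glued_le x y := exists m, side_le x m /\ side_le m y.

Hypothesis po1 : porder_on P1 le1.
Hypothesis po2 : porder_on P2 le2.
Hypothesis agree : forall x y, P1 x -> P2 x -> P1 y -> P2 y -> (le1 x y <-> le2 x y).

Local Ltac unpack :=
  destruct po1 as [refl1 [anti1 trans1]];
  destruct po2 as [refl2 [anti2 trans2]];
  pose proof (fun x y hx hx' hy hy' => proj2 (@agree x y hx hx' hy hy')) as le1_of_le2;
  pose proof (fun x y hx hx' hy hy' => proj1 (@agree x y hx hx' hy hy')) as le2_of_le1.

Lemma side_le_refl x : P1 x \/ P2 x -> side_le x x.
Proof.
  destruct po1 as [refl1 _], po2 as [refl2 _].
  intros [h|h]; [left|right]; repeat split; auto.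
Qed.

Lemma side_le_glued x y : side_le x y -> glued_le x y.
Proof.
  intros h; exists y; split; auto; apply side_le_refl.
  destruct h as [[_ [h _]]|[_ [h _]]]; auto.
Qed.

(* Two steps on the same side compose; an alternation 1,2,1 (or 2,1,2) has
   its middle step between shared events, where the two orders agree. *)
Lemma side_le3_glued x a b y :
  side_le x a -> side_le a b -> side_le b y -> glued_le x y.
Proof.
  unpack.
  intros [[x1 [a1 xa]]|[x2 [a2 xa]]] [[a1' [b1 ab]]|[a2' [b2 ab]]]
         [[b1' [y1 b_y]]|[b2' [y2 b_y]]];
  first [ solve [exists a; split;
                 solve [left; repeat split; eauto | right; repeat split; eauto]]
        | solve [exists b; split;
                 solve [left; repeat split; eauto | right; repeat split; eauto]]].
Qed.

Lemma glued_le_refl x : P1 x \/ P2 x -> glued_le x x.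
Proof. intros h; apply side_le_glued, side_le_refl, h. Qed.

Lemma glued_le_trans x y z : glued_le x y -> glued_le y z -> glued_le x z.
Proof.
  intros [a [xa ay]] [b [yb bz]].
  destruct (side_le3_glued xa ay yb) as [m [xm mb]].
  exact (side_le3_glued xm mb bz).
Qed.

Lemma glued_le_on1 x y : P1 x -> P1 y -> glued_le x y -> le1 x y.
Proof.
  unpack.
  intros hx hy [m [[[_ [m1 xm]]|[x2 [m2 xm]]] [[m1' [_ my]]|[m2' [y2 my]]]]]; eauto.
Qed.

Lemma glued_le_cross x y : P1 x -> P2 y -> glued_le x y ->
  exists c, P1 c /\ P2 c /\ le1 x c /\ le2 c y.
Proof.
  unpack.
  intros hx hy [m [[[_ [m1 xm]]|[x2 [m2 xm]]] [[m1' [y1 my]]|[m2' [_ my]]]]];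
  first [ solve [exists y; repeat split; eauto]
        | solve [exists m; repeat split; eauto]
        | solve [exists x; repeat split; eauto]].
Qed.

Hypothesis fin1 : fin_below P1 le1.
Hypothesis fin2 : fin_below P2 le2.

Lemma glued_le_finite : finite_preds glued_le.
Proof.
  apply finite_preds_comp; apply finite_preds_union; apply finite_preds_rel_on; assumption.
Qed.

End GluedOrder.

Lemma glued_le_swap E (P1 P2 : E -> Prop) le1 le2 x y :
  glued_le P1 P2 le1 le2 x y <-> glued_le P2 P1 le2 le1 x y.
Proof. unfold glued_le, side_le; firstorder. Qed.

Section GluedOrderAntisym.
Variables (E : Type) (P1 P2 : E -> Prop) (le1 le2 : E -> E -> Prop).
Hypothesis po1 : porder_on P1 le1.
Hypothesis po2 : porder_on P2 le2.
Hypothesis agree : forall x y, P1 x -> P2 x -> P1 y -> P2 y -> (le1 x y <-> le2 x y).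

Let agree_swap x y : P2 x -> P1 x -> P2 y -> P1 y -> (le2 x y <-> le1 x y).
Proof. intros; symmetry; auto. Qed.

Lemma glued_le_on2 x y : P2 x -> P2 y -> glued_le P1 P2 le1 le2 x y -> le2 x y.
Proof.
  intros hx hy h; apply glued_le_swap in h.
  exact (glued_le_on1 po2 po1 agree_swap hx hy h).
Qed.

(* A [P1]-event below and above a [P2]-event is squeezed between two shared
   events, hence is itself shared. *)
Lemma glued_le_shared x y : P1 x -> P2 y ->
  glued_le P1 P2 le1 le2 x y -> glued_le P1 P2 le1 le2 y x -> P2 x.
Proof.
  destruct po1 as [_ [anti1 trans1]], po2 as [_ [_ trans2]].
  intros hx hy xy yx; apply glued_le_swap in yx.
  destruct (glued_le_cross po1 po2 agree hx hy xy) as [c [c1 [c2 [xc cy]]]].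
  destruct (glued_le_cross po2 po1 agree_swap hy hx yx)
    as [c' [c'2 [c'1 [yc' c'x]]]].
  assert (cc' : le1 c c') by (apply agree; eauto).
  now rewrite (anti1 x c'); eauto.
Qed.

Lemma glued_le_anti x y : P1 x \/ P2 x -> P1 y \/ P2 y ->
  glued_le P1 P2 le1 le2 x y -> glued_le P1 P2 le1 le2 y x -> x = y.
Proof.
  destruct po1 as [_ [anti1 _]], po2 as [_ [anti2 _]].
  intros hx hy xy yx.
  assert (both_in2 : P2 x -> P2 y -> x = y)
    by (intros; apply anti2; auto; apply glued_le_on2; auto).
  destruct hx as [hx|hx], hy as [hy|hy]; auto.
  - apply anti1; auto; apply (glued_le_on1 po1 po2 agree); auto.
  - apply both_in2; eauto using glued_le_shared.
  - apply both_in2; eauto using glued_le_shared.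
Qed.

End GluedOrderAntisym.

Lemma is_system_porder E (A : system E) : is_system A -> porder_on (ev A) (le A).
Proof. intros [rfl [anti [tr _]]]; repeat split; auto. Qed.

Lemma is_system_fin E (A : system E) : is_system A -> fin_below (ev A) (le A).
Proof. intros [_ [_ [_ fin]]]; exact fin. Qed.

Section Gluing.
Variables (LO CH D E : Type) (F : frame LO CH D) (chan : E -> CH) (msg : E -> D).

Definition loc_exec (A : system E) (l : LO) : Prop :=
  (forall x y, loc_ev F chan A l x -> loc_ev F chan A l y -> le A x y \/ le A y x) /\
  exists t, traces F l t /\ reads F chan msg A l t.

Section Transfer.
Variables (A A' : system E) (l : LO).
Hypothesis same_loc_ev : forall e, loc_ev F chan A l e <-> loc_ev F chan A' l e.
Hypothesis same_loc_le :
  forall x y, loc_ev F chan A l x -> loc_ev F chan A l y -> (le A x y <-> le A' x y).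

Lemma npred_transfer e n :
  loc_ev F chan A l e -> (npred F chan A l e n <-> npred F chan A' l e n).
Proof.
  intros he.
  assert (same_below : forall x, (loc_ev F chan A l x /\ le A x e /\ x <> e) <->
                                 (loc_ev F chan A' l x /\ le A' x e /\ x <> e)).
  { intros x; split; intros [hx [hxe hne]].
    - split; [apply same_loc_ev; auto | split; [apply same_loc_le; auto | auto]].
    - assert (hx' : loc_ev F chan A l x) by (apply same_loc_ev; auto).
      split; [auto | split; [apply same_loc_le; auto | auto]]. }
  unfold npred; split; intros [s [nd [len hs]]]; exists s; split; auto; split; auto;
    intros x; rewrite hs; [apply same_below | symmetry; apply same_below].
Qed.

Lemma loc_exec_transfer : loc_exec A' l -> loc_exec A l.
Proof.
  intros [lin [t [ht hr]]]; split.
  - intros x y hx hy.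
    destruct (lin x y) as [h|h]; try apply same_loc_ev; auto;
      [left|right]; apply same_loc_le; auto.
  - exists t; split; auto; intros n; specialize (hr n); destruct (t n) as [lab|].
    + destruct hr as [e [he [hn hlab]]].
      assert (he' : loc_ev F chan A l e) by (apply same_loc_ev; auto).
      exists e; split; [auto | split; [apply npred_transfer; auto | auto]].
    + intros [e [he hn]]; apply hr; exists e; split.
      * apply same_loc_ev; auto.
      * apply npred_transfer; auto.
Qed.

End Transfer.

Section GlueExec.
Variables (Ao A1 : system E) (Cc Oc : CH -> Prop).
Hypothesis Ao_exec : is_exec F chan msg Ao.
Hypothesis A1_exec : is_exec F chan msg A1.
Hypothesis cut_agree : sys_eq (restrict chan Ao Cc) (restrict chan A1 Cc).
Hypothesis sides_separate : forall l,
  (forall c, is_endpoint (ends F) l c -> Oc c \/ Cc c) \/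
  (forall c, is_endpoint (ends F) l c -> ~ Oc c).

Definition from_Ao e := ev Ao e /\ (Oc (chan e) \/ Cc (chan e)).
Definition from_A1 e := ev A1 e /\ ~ Oc (chan e).

Definition glued_sys : system E :=
  System (fun e => from_Ao e \/ from_A1 e) (glued_le from_Ao from_A1 (le Ao) (le A1)).

Lemma cut_ev e : Cc (chan e) -> (ev Ao e <-> ev A1 e).
Proof.
  intros hc; destruct cut_agree as [same_ev _]; simpl in same_ev.
  split; intros h; apply same_ev; auto.
Qed.

Lemma shared_cut e : from_Ao e -> from_A1 e -> Cc (chan e).
Proof. intros [_ [h|h]] [_ h']; tauto. Qed.

Lemma glued_orders_agree x y : from_Ao x -> from_A1 x -> from_Ao y -> from_A1 y ->
  (le Ao x y <-> le A1 x y).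
Proof.
  intros ox sx oy sy; destruct cut_agree as [_ same_le]; simpl in same_le.
  apply same_le; split; (apply shared_cut || apply ox || apply oy); auto.
Qed.

Lemma from_Ao_porder : porder_on from_Ao (le Ao).
Proof.
  apply porder_on_sub with (ev Ao); [intros e []; auto | apply is_system_porder, Ao_exec].
Qed.

Lemma from_A1_porder : porder_on from_A1 (le A1).
Proof.
  apply porder_on_sub with (ev A1); [intros e []; auto | apply is_system_porder, A1_exec].
Qed.

Lemma glued_le_Ao x y : from_Ao x -> from_Ao y -> (le glued_sys x y <-> le Ao x y).
Proof.
  intros hx hy; split.
  - apply (glued_le_on1 from_Ao_porder from_A1_porder glued_orders_agree); auto.
  - intros h; apply side_le_glued; [apply from_Ao_porder | apply from_A1_porder |].
    left; exact (conj hx (conj hy h)).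
Qed.

Lemma glued_le_A1 x y : from_A1 x -> from_A1 y -> (le glued_sys x y <-> le A1 x y).
Proof.
  intros hx hy; split.
  - apply (glued_le_on2 from_Ao_porder from_A1_porder glued_orders_agree); auto.
  - intros h; apply side_le_glued; [apply from_Ao_porder | apply from_A1_porder |].
    right; exact (conj hx (conj hy h)).
Qed.

Lemma glued_sys_system : is_system glued_sys.
Proof.
  pose proof from_Ao_porder as po; pose proof from_A1_porder as p1.
  split; [|split; [|split]]; simpl.
  - intros x hx; apply glued_le_refl; auto.
  - intros x y hx hy; apply (glued_le_anti po p1 glued_orders_agree); auto.
  - intros x y z _ _ _; apply (glued_le_trans po p1 glued_orders_agree).
  - intros e _.
    assert (fo : fin_below from_Ao (le Ao))
      by (apply fin_below_sub with (ev Ao);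
          [intros ? []; auto | apply is_system_fin, Ao_exec]).
    assert (f1 : fin_below from_A1 (le A1))
      by (apply fin_below_sub with (ev A1);
          [intros ? []; auto | apply is_system_fin, A1_exec]).
    destruct (glued_le_finite fo f1 e) as [s hs]; exists s; auto.
Qed.

Lemma loc_exec_glued_Ao l :
  (forall c, is_endpoint (ends F) l c -> Oc c \/ Cc c) -> loc_exec glued_sys l.
Proof.
  intros hl.
  assert (same : forall e, loc_ev F chan glued_sys l e <-> loc_ev F chan Ao l e).
  { intros e; split.
    - intros [[[h _]|[h hn]] he]; split; auto.
      destruct (hl _ he) as [hO|hC]; [contradiction | apply cut_ev; auto].
    - intros [h he]; split; auto; left; split; auto. }
  apply loc_exec_transfer with Ao; auto; [| apply Ao_exec].
  intros x y [hx cx]%same [hy cy]%same; apply glued_le_Ao; split; auto.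
Qed.

Lemma loc_exec_glued_A1 l :
  (forall c, is_endpoint (ends F) l c -> ~ Oc c) -> loc_exec glued_sys l.
Proof.
  intros hl.
  assert (same : forall e, loc_ev F chan glued_sys l e <-> loc_ev F chan A1 l e).
  { intros e; split.
    - intros [[[h [hO|hC]]|[h _]] he]; split; auto.
      + exfalso; exact (hl _ he hO).
      + apply cut_ev; auto.
    - intros [h he]; split; auto; right; split; auto. }
  apply loc_exec_transfer with A1; auto; [| apply A1_exec].
  intros x y [hx cx]%same [hy cy]%same; apply glued_le_A1; split; auto.
Qed.

Lemma glued_sys_exec : is_exec F chan msg glued_sys.
Proof.
  split; [apply glued_sys_system|].
  intros l; destruct (sides_separate l);
    [apply loc_exec_glued_Ao | apply loc_exec_glued_A1]; auto.
Qed.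

Lemma restrict_glued_Ao C : (forall c, C c -> Oc c) ->
  sys_eq (restrict chan glued_sys C) (restrict chan Ao C).
Proof.
  intros hC.
  assert (hAo : forall e, ev glued_sys e -> C (chan e) -> from_Ao e)
    by (intros e [h|[_ hn]] hc; [auto | exfalso; auto]).
  split; simpl.
  - intros e; split.
    + intros [h hc]; split; auto; apply hAo; auto.
    + intros [h hc]; split; auto; left; split; auto.
  - intros x y [hx cx] [hy cy]; apply glued_le_Ao; auto.
Qed.

Lemma restrict_glued_A1 C : (forall c, C c -> ~ Oc c) ->
  sys_eq (restrict chan glued_sys C) (restrict chan A1 C).
Proof.
  intros hC.
  assert (hA1 : forall e, ev glued_sys e -> C (chan e) -> from_A1 e).
  { intros e [[h [hO|hc']]|h] hc; auto.
    - exfalso; exact (hC _ hc hO).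
    - split; [apply cut_ev|]; auto. }
  split; simpl.
  - intros e; split.
    + intros [h hc]; split; auto; apply hA1; auto.
    + intros [h hc]; split; auto; right; split; auto.
  - intros x y [hx cx] [hy cy]; apply glued_le_A1; auto.
Qed.

End GlueExec.
End Gluing.

Section Systems.
Variable E : Type.
Implicit Types A B C : system E.

Lemma sys_eq_refl A : sys_eq A A.
Proof. split; intros; reflexivity. Qed.

Lemma sys_eq_sym A B : sys_eq A B -> sys_eq B A.
Proof.
  intros [same_ev same_le]; split; [intros e; symmetry; auto|].
  intros x y hx hy; symmetry; apply same_le; apply same_ev; auto.
Qed.

Lemma sys_eq_trans A B C : sys_eq A B -> sys_eq B C -> sys_eq A C.
Proof.
  intros [ev1 le1] [ev2 le2]; split; [intros e; rewrite ev1; auto|].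
  intros x y hx hy; rewrite le1, le2; try reflexivity; auto; apply ev1; auto.
Qed.

End Systems.

Lemma last_cons A (a : A) s d : last (a :: s) d = last s a.
Proof.
  revert a d; induction s as [|b s IH]; intros a d; [reflexivity|].
  change (last (b :: s) d = last (b :: s) a); rewrite !IH; reflexivity.
Qed.

Section CutSide.
Variables (LO CH D : Type) (F : frame LO CH D) (Cs Ccut Co : CH -> Prop).

Lemma end_loc_cons (l l' : LO) (c : CH) s : end_loc l ((c, l') :: s) = end_loc l' s.
Proof. apply last_cons. Qed.

Lemma endpoints_connected l l' c :
  is_endpoint (ends F) l c -> is_endpoint (ends F) l' c -> l = l' \/ connects F c l l'.
Proof.
  intros [a [b [hab hl]]] [a' [b' [hab' hl']]]; rewrite hab in hab'.
  injection hab' as <- <-; unfold connects; rewrite hab.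
  destruct hl as [-> | ->], hl' as [-> | ->]; auto.
Qed.

Inductive co_reach : LO -> Prop :=
  | co_reach_start l c : Co c -> is_endpoint (ends F) l c -> co_reach l
  | co_reach_step l l' c : co_reach l -> ~ Ccut c ->
      is_endpoint (ends F) l c -> is_endpoint (ends F) l' c -> co_reach l'.

(* [Co c] is listed separately because a [Co]-channel may have no endpoints. *)
Definition co_side (c : CH) : Prop :=
  Co c \/ (~ Ccut c /\ exists l, co_reach l /\ is_endpoint (ends F) l c).

Lemma co_side_separates l :
  (forall c, is_endpoint (ends F) l c -> co_side c \/ Ccut c) \/
  (forall c, is_endpoint (ends F) l c -> ~ co_side c).
Proof.
  destruct (classic (co_reach l)) as [hl|hl]; [left|right].
  - intros c hc; destruct (classic (Ccut c)); [right | left; right]; eauto.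
  - intros c hc [hCo|[hn [l' [hl' hc']]]]; apply hl;
      [eapply co_reach_start | eapply co_reach_step]; eauto.
Qed.

Hypothesis cut : undirected_cut F Cs Ccut Co.

(* Induction on [co_reach l] prepends to a cut-free path leaving [l] the
   step that reached [l], until the path starts at a [Co]-endpoint. *)
Lemma co_reach_cut_free_path l : co_reach l ->
  forall s, upath F l s -> (forall c, In c (map fst s) -> ~ Ccut c) ->
  forall c, Cs c -> ~ is_endpoint (ends F) (end_loc l s) c.
Proof.
  destruct cut as [_ [_ [_ every_path_cut]]].
  induction 1 as [l co hco hl | l l' c _ IH hc hl hl'].
  - intros s hs free cs hcs hend.
    destruct (every_path_cut l s co cs hco hl hs hcs hend) as [c [hin hc]].
    exact (free c hin hc).
  - intros s hs free.
    destruct (endpoints_connected hl hl') as [<-|hconn]; [now apply IH|].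
    rewrite <- (end_loc_cons l l' c); apply IH; [split; auto|].
    intros c' [<-|hin]; auto.
Qed.

Lemma Cs_not_co_side c : Cs c -> ~ co_side c.
Proof.
  intros hcs [hco|[_ [l [hl he]]]].
  - destruct cut as [_ [disj _]]; exact (disj c (conj hcs hco)).
  - exact (co_reach_cut_free_path hl [] I (fun _ h => match h with end) hcs he).
Qed.

End CutSide.

Theorem theorem1 (LO CH D E : Type) (F : frame LO CH D)
  (chan : E -> CH) (msg : E -> D) (Cs Ccut Co : CH -> Prop) :
  undirected_cut F Cs Ccut Co ->
  no_disclosure F chan msg Cs Ccut ->
  no_disclosure F chan msg Cs Co.
Proof.
  intros cut nd B hB S; split.
  - intros [A [hA [_ hS]]]; exists A; auto.
  - intros [Ao [hAo hSo]].
    assert (hK : lruns F chan msg Ccut (restrict chan Ao Ccut))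
      by (exists Ao; split; [exact hAo | apply sys_eq_refl]).
    destruct (proj2 (nd B hB _) hK) as [A1 [hA1 [hB1 hK1]]].
    assert (cut_agree : sys_eq (restrict chan Ao Ccut) (restrict chan A1 Ccut))
      by (apply sys_eq_sym; exact hK1).
    exists (glued_sys chan Ao A1 Ccut (co_side F Ccut Co)); split; [|split].
    + apply glued_sys_exec; auto using co_side_separates.
    + apply sys_eq_trans with (restrict chan A1 Cs); [|exact hB1].
      apply (restrict_glued_A1 (co_side F Ccut Co) hAo hA1 cut_agree).
      exact (Cs_not_co_side cut).
    + apply sys_eq_trans with (restrict chan Ao Co); [|exact hSo].
      apply (restrict_glued_Ao (co_side F Ccut Co) hAo hA1 cut_agree).
      intros c hc; left; exact hc.
Qed.
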